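(* Let $n\geqslant 1$ and $0\leqslant d\leqslant n-1$ be integers. Then, modulo $\Phi_n(q)$, \[ \sum_{k=0}^{n-1}q^k\begin{bmatrix}2k\\ k+d\end{bmatrix}(-q^{k+1};q)_{n-1-k} \equiv\begin{cases} 0&\text{if }n\equiv d\pmod{2},\\ q^{3(n-1)^2/4-3d^2/4-1} &\text{if }n\equiv d+1\pmod{4},\\ -q^{3(n-1)^2/4-3d^2/4-1} &\text{if }n\equiv d-1\pmod{4}, \end{cases} \] and \[ \sum_{k=0}^{n-1}q^k\begin{bmatrix}2k\\ k+d\end{bmatrix}(-q^{k+1};q)_{n-1-k}^2 \equiv \sum_{k=d+1}^{n}q^{\binom{n}{2}+\binom{k}{2}-d^2}\pmod{\Phi_n(q)}. \]
   Context: Here $q$ is an indeterminate. For $n\geq 1$, $(x;q)_n=(1-x)(1-xq)\cdots(1-xq^{n-1})$ and $(x;q)_0=1$. The $q$-binomial coefficient is $\begin{bmatrix}n\\ k\end{bmatrix}=\frac{(q;q)_n}{(q;q)_k(q;q)_{n-k}}$ if $0\leqslant k\leqslant n$ and $0$ otherwise. $\Phi_n(q)=\prod_{1\le k\le n,\ \gcd(n,k)=1}(q-e^{2\pi i k/n})$ is the $n$-th cyclotomic polynomial. Congruences modulo $\Phi_n(q)$ are between rational functions in $q$ (possibly with negative powers of $q$) whose denominators are coprime to $\Phi_n(q)$: $A\equiv B$ means $A-B$ is such a rational function times $\Phi_n(q)$. *)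

From HB Require Import structures.
From mathcomp Require Import all_boot all_order all_algebra all_field.
Set Implicit Arguments. Unset Strict Implicit. Unset Printing Implicit Defensive.
Import Order.TTheory GRing.Theory Num.Theory.
Local Open Scope ring_scope.

Notation RF := {fraction {poly rat}}.

Definition qq : RF := tofrac ('X : {poly rat}).

Definition qpoch (x : RF) (n : nat) : RF := \prod_(i < n) (1 - x * qq ^+ i).

Definition qbinom (n k : nat) : RF :=
  if (k <= n)%N then qpoch qq n / (qpoch qq k * qpoch qq (n - k)) else 0.

Definition PhiQ (n : nat) : {poly rat} := map_poly (intr : int -> rat) 'Phi_n.

Definition cong_Phi (n : nat) (A B : RF) : Prop :=
  exists (a b : {poly rat}),
    [/\ b != 0, coprimep b (PhiQ n) & A - B = (tofrac a / tofrac b) * tofrac (PhiQ n)].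

(* Write S_p(d) for the sum with p-th powers.  Splitting off its last term gives
   S_p(n+1, d) = (1 + q^n)^p S_p(n, d) + q^n [2n, n+d], and an induction on n, using
   Pascal's rule and the ratio of neighbouring q-binomials, yields
     (1 + q^n) (S_1(d) + q^(3(d+1)) S_1(d+2)) = q^d (1 + q^(d+1)) [2n, n+d+1]
   together with the analogous identity for the second q-difference of q^(j^2) S_2(j).
   Modulo Phi_n(q) the factor 1 + q^n is 2, hence invertible, while [2n, m] vanishes
   for n < m < 2n, because (1 - q^m) [2n, m] is a multiple of 1 - q^(2n).  So S_1(d)
   and q^(d^2) S_2(d) satisfy, modulo Phi_n(q), the same two-step recurrences as the
   claimed right-hand sides, and both claims follow by descending induction on d
   from the values at d = n and d = n - 1. *)

From HB Require Import structures.
From mathcomp Require Import all_boot all_order all_algebra all_field.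
From mathcomp Require Import ring zify.
Set Implicit Arguments.
Unset Strict Implicit.
Unset Printing Implicit Defensive.
Import Order.TTheory GRing.Theory Num.Theory.
Local Open Scope ring_scope.

Section LocalDvd.

Variables (F : fieldType) (p : {poly F}).

Definition local_dvd (A : {fraction {poly F}}) : Prop :=
  exists a b : {poly F},
    [/\ b != 0, coprimep b p & A = tofrac a / tofrac b * tofrac p].

Lemma local_dvd_poly a : p %| a -> local_dvd (tofrac a).
Proof.
move=> /dvdpP [c ->]; exists c, 1; split; rewrite ?oner_eq0 ?coprime1p //.
by rewrite tofrac1 divr1 tofracM.
Qed.
Lemma local_dvd0 : local_dvd 0.
Proof. by rewrite -tofrac0; apply: local_dvd_poly; rewrite dvdp0. Qed.

Lemma local_dvdD A B : local_dvd A -> local_dvd B -> local_dvd (A + B).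
Proof.
move=> [a1 [b1 [nz1 cop1 ->]]] [a2 [b2 [nz2 cop2 ->]]].
exists (a1 * b2 + a2 * b1), (b1 * b2); split; first exact: mulf_neq0.
  by rewrite coprimepMl cop1.
by rewrite -mulrDl addf_div ?tofrac_eq0 // tofracD !tofracM.
Qed.

Lemma local_dvdMl c e A : e != 0 -> coprimep e p -> local_dvd A ->
  local_dvd (tofrac c / tofrac e * A).
Proof.
move=> nze cope [a [b [nzb copb ->]]].
exists (c * a), (e * b); split; first exact: mulf_neq0.
  by rewrite coprimepMl cope.
by rewrite mulrA mulf_div !tofracM.
Qed.

Lemma local_dvdMpl c A : local_dvd A -> local_dvd (tofrac c * A).
Proof.
by move/(@local_dvdMl c 1 A (oner_neq0 _) (coprime1p p)); rewrite tofrac1 divr1.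
Qed.

Lemma local_dvdN A : local_dvd A -> local_dvd (- A).
Proof. by move/(local_dvdMpl (-1)); rewrite tofracN tofrac1 mulN1r. Qed.

Lemma local_dvdB A B : local_dvd A -> local_dvd B -> local_dvd (A - B).
Proof. by move=> dA /local_dvdN; apply: local_dvdD. Qed.

Lemma local_dvd_cancel c A : c != 0 -> coprimep c p ->
  local_dvd (tofrac c * A) -> local_dvd A.
Proof.
move=> nzc copc /(@local_dvdMl 1 c _ nzc copc).
by rewrite tofrac1 mulrA mul1r mulVf ?mul1r // tofrac_eq0.
Qed.

End LocalDvd.

Lemma nat_down_ind2 (P : nat -> Prop) n :
  P n -> P n.-1 -> (forall d, (d.+2 <= n)%N -> P d.+1 -> P d.+2 -> P d) ->
  forall d, (d <= n)%N -> P d.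
Proof.
move=> Pn Pn1 Pstep d le_dn; rewrite -(subKn le_dn).
elim/ltn_ind: (n - d)%N (leq_subr d n) => -[|[|k]] IHk le_kn.
- by rewrite subn0.
- by rewrite subn1.
- apply: Pstep; first lia.
  + by rewrite (_ : (n - k.+2).+1 = n - k.+1)%N; [apply: IHk | ]; lia.
  + by rewrite (_ : (n - k.+2).+2 = n - k)%N; [apply: IHk | ]; lia.
Qed.

Lemma exprz_subn (F : fieldType) (x : F) (a b : nat) :
  x != 0 -> x ^ (a%:Z - b%:Z) = x ^+ a / x ^+ b.
Proof. by move=> x_neq0; rewrite expfzDr // -invr_expz. Qed.

Lemma map_PhiQ_algC n :
  map_poly (ratr : rat -> algC) (PhiQ n) = map_poly (intr : int -> algC) 'Phi_n.
Proof. by rewrite /PhiQ -map_poly_comp; apply: eq_map_poly => z /=; rewrite rmorph_int. Qed.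

Lemma coprimep_PhiQ n (c : {poly rat}) : (0 < n)%N ->
  (forall x : algC, n.-primitive_root x -> (map_poly ratr c).[x] != 0) ->
  coprimep c (PhiQ n).
Proof.
move=> n_gt0 c_nz; rewrite -(coprimep_map (ratr : {rmorphism rat -> algC})).
have [z prim_z] := C_prim_root_exists n_gt0.
rewrite map_PhiQ_algC (Cintr_Cyclotomic prim_z) coprimep_def.
apply/negPn/negP => /closed_rootP [x]; rewrite root_gcd => /andP [cx].
by rewrite (root_cyclotomic prim_z) => /c_nz; rewrite -/(root _ x) cx.
Qed.

Lemma PhiQ_dvd_Xn_sub1 n : (0 < n)%N -> PhiQ n %| 'X^n - 1.
Proof.
move=> n_gt0; have := prod_Cyclotomic n_gt0.
rewrite (big_rem n) -?dvdn_divisors //= => /(congr1 (map_poly (intr : int -> rat))).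
by rewrite rmorphM rmorphB /= map_polyXn rmorph1 => <-; rewrite dvdp_mulr.
Qed.

Lemma coprimep_Xn_PhiQ n k : (0 < n)%N -> coprimep 'X^k (PhiQ n).
Proof.
move=> n_gt0; apply: coprimep_PhiQ => // x prim_x.
rewrite map_polyXn hornerXn expf_neq0 //; apply/eqP => x0.
by move: (prim_expr_order prim_x); rewrite x0 expr0n gtn_eqF // => /eqP; rewrite eq_sym oner_eq0.
Qed.

Lemma coprimep_1DXn_PhiQ n : (0 < n)%N -> coprimep (1 + 'X^n) (PhiQ n).
Proof.
move=> n_gt0; apply: coprimep_PhiQ => // x prim_x.
rewrite rmorphD rmorph1 /= map_polyXn hornerD hornerC hornerXn (prim_expr_order prim_x).
by rewrite -(natrD _ 1 1) pnatr_eq0.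
Qed.

Lemma coprimep_1BXm_PhiQ n m : (n < m < 2 * n)%N -> coprimep (1 - 'X^m) (PhiQ n).
Proof.
move=> /andP [lt_nm lt_m2n]; apply: coprimep_PhiQ => [|x prim_x]; first lia.
rewrite rmorphB rmorph1 /= map_polyXn hornerD hornerN hornerC hornerXn subr_eq0 eq_sym.
rewrite -(subnK (ltnW lt_nm)) exprD (prim_expr_order prim_x) mulr1 -(prim_order_dvd prim_x).
by apply/negP => /dvdn_leq; lia.
Qed.

Lemma qq_neq0 : qq != 0.
Proof. by rewrite tofrac_eq0 polyX_eq0. Qed.

Lemma poly1DXn_neq0 k : 1 + 'X^k != 0 :> {poly rat}.
Proof.
apply/eqP => /(congr1 (horner^~ 0)) /eqP.
rewrite horner0 hornerD hornerC hornerXn expr0n.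
by case: k => [|k]; rewrite ?addr0 ?oner_eq0 // -(natrD _ 1 1) pnatr_eq0.
Qed.

Lemma poly1BXn_neq0 k : 1 - 'X^(k.+1) != 0 :> {poly rat}.
Proof.
apply/eqP => /(congr1 (horner^~ 0)) /eqP.
by rewrite horner0 hornerD hornerN hornerC hornerXn expr0n subr0 oner_eq0.
Qed.

Lemma qq1BXn_neq0 k : 1 - qq ^+ k.+1 != 0.
Proof. by rewrite -tofracXn -tofrac1 -tofracB tofrac_eq0 poly1BXn_neq0. Qed.

Lemma qpoch0 x : qpoch x 0 = 1.
Proof. by rewrite /qpoch big_ord0. Qed.

Lemma qpochS x m : qpoch x m.+1 = qpoch x m * (1 - x * qq ^+ m).
Proof. by rewrite /qpoch big_ord_recr. Qed.

Lemma qpoch_qqS k : qpoch qq k.+1 = qpoch qq k * (1 - qq ^+ k.+1).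
Proof. by rewrite qpochS exprS. Qed.

Lemma qpoch_qq_neq0 k : qpoch qq k != 0.
Proof.
elim: k => [|k IHk]; first by rewrite qpoch0 oner_eq0.
by rewrite qpoch_qqS mulf_neq0 ?qq1BXn_neq0.
Qed.

Lemma qbinomE N M : (M <= N)%N ->
  qbinom N M = qpoch qq N / (qpoch qq M * qpoch qq (N - M)).
Proof. by rewrite /qbinom => ->. Qed.

Lemma qbinom_small N M : (N < M)%N -> qbinom N M = 0.
Proof. by move=> lt_NM; rewrite /qbinom leqNgt lt_NM. Qed.

Lemma qbinomnn N : qbinom N N = 1.
Proof. by rewrite qbinomE // subnn qpoch0 mulr1 divff ?qpoch_qq_neq0. Qed.

Lemma qbinomn0 N : qbinom N 0 = 1.
Proof. by rewrite qbinomE // subn0 qpoch0 mul1r divff ?qpoch_qq_neq0. Qed.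

Lemma qbinom_ratio N M :
  qbinom N M.+1 * (1 - qq ^+ M.+1) = qbinom N M * (1 - qq ^+ (N - M)).
Proof.
case: (ltngtP M N) => [lt_MN|lt_NM|->]; last first.
- by rewrite qbinom_small // subnn expr0 subrr mul0r mulr0.
- by rewrite !qbinom_small ?mul0r // ltnS ltnW.
rewrite !qbinomE ?(ltnW lt_MN) // -(subnSK lt_MN) !qpoch_qqS.
rewrite [_ * _ * qpoch qq _]mulrAC [_ * (_ * _)]mulrA !invfM !mulrA.
by rewrite !mulfVK ?qq1BXn_neq0.
Qed.

Lemma qbinomSS_ratio N M :
  qbinom N.+1 M.+1 * (1 - qq ^+ M.+1) = qbinom N M * (1 - qq ^+ N.+1).
Proof.
have [lt_NM | le_MN] := ltnP N M; first by rewrite !qbinom_small ?mul0r.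
rewrite !qbinomE // subSS !qpoch_qqS [_ * _ * qpoch qq _]mulrAC invfM mulrA.
by rewrite mulfVK ?qq1BXn_neq0 // mulrAC.
Qed.

Lemma qbinom_pascal N M :
  qbinom N.+1 M.+1 = qbinom N M + qq ^+ M.+1 * qbinom N M.+1.
Proof.
have [lt_NM | le_MN] := ltnP N M.
  by rewrite !qbinom_small ?mulr0 ?addr0 // ltnW.
apply: (mulIf (qq1BXn_neq0 M)).
rewrite qbinomSS_ratio mulrDl -mulrA qbinom_ratio.
have -> : qq ^+ N.+1 = qq ^+ M.+1 * qq ^+ (N - M) by rewrite -exprD addSn subnKC.
ring.
Qed.

Lemma qbinom_poly N M : exists g : {poly rat}, qbinom N M = tofrac g.
Proof.
elim: N M => [|N IHN] [|M]; try by exists 1; rewrite qbinomn0 tofrac1.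
  by exists 0; rewrite qbinom_small ?tofrac0.
have [[g1 E1] [g2 E2]] := (IHN M, IHN M.+1).
by exists (g1 + 'X^(M.+1) * g2); rewrite qbinom_pascal E1 E2 tofracD tofracM tofracXn.
Qed.

Lemma qbinom_central_local_dvd n m : (n < m < 2 * n)%N ->
  local_dvd (PhiQ n) (qbinom (2 * n) m).
Proof.
move=> range_m; have [k def_m] : exists k, m = k.+1 by exists m.-1; lia.
have [N def_2n] : exists N, (2 * n)%N = N.+1 by exists (2 * n).-1; lia.
apply: (local_dvd_cancel (poly1BXn_neq0 k)); first by rewrite -def_m coprimep_1BXm_PhiQ.
have [g Eg] := qbinom_poly N k.
have -> : tofrac (1 - 'X^(k.+1)) * qbinom (2 * n) m = tofrac (- g * (1 + 'X^n) * ('X^n - 1)).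
  rewrite !rmorphM rmorphN !rmorphB rmorphD rmorph1 /= !rmorphXn -/qq.
  by rewrite mulrC def_m def_2n qbinomSS_ratio Eg -def_2n mulnC exprM; ring.
by apply: local_dvd_poly; rewrite dvdp_mull // PhiQ_dvd_Xn_sub1 //; lia.
Qed.

Lemma qbinom_central_rec n d :
  (1 + qq ^+ n.+1) * (qq ^+ d * (1 + qq ^+ d.+1) * qbinom (2 * n) (n + d.+1)
      + qq ^+ n * qbinom (2 * n) (n + d)
      + qq ^+ n * (qq ^+ d.+1) ^+ 3 * qbinom (2 * n) (n + d.+2))
  = qq ^+ d * (1 + qq ^+ d.+1) * qbinom (2 * n.+1) (n.+1 + d.+1).
Proof.
set c := qq ^+ d * _; case: (ltngtP n d) => [lt_nd | lt_dn | ->].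
- by rewrite !qbinom_small ?(mulr0, addr0) //; lia.
- have [a def_n] : exists a, n = (d.+1 + a)%N by exists (n - d.+1)%N; lia.
  rewrite !addnS (_ : (2 * n.+1 = (2 * n).+2)%N); last lia.
  rewrite (qbinom_pascal (2 * n).+1) !qbinom_pascal.
  have R1 := qbinom_ratio (2 * n) (n + d).
  have R2 := qbinom_ratio (2 * n) (n + d).+1.
  rewrite (_ : (2 * n - (n + d) = a.+1)%N) in R1; last lia.
  rewrite (_ : (2 * n - (n + d).+1 = a)%N) in R2; last lia.
  set X0 := qbinom _ (n + d) in R1 *; set X1 := qbinom _ (n + d).+1 in R1 R2 *.
  set X2 := qbinom _ (n + d).+2 in R2 *.
  apply/eqP; rewrite -subr_eq0; apply/eqP.
  (* The difference of the two sides is a combination of the ratio relations R1, R2. *)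
  transitivity ((qq ^+ d + qq ^+ d * qq ^+ d.+1 + qq ^+ (n + d).+1)
                 * (X1 * (1 - qq ^+ (n + d).+1) - X0 * (1 - qq ^+ a.+1))
               + qq ^+ n * (qq ^+ d.+1) ^+ 3 * (X2 * (1 - qq ^+ (n + d).+2) - X1 * (1 - qq ^+ a))).
    by rewrite /c def_n !(exprS, exprD); ring.
  by rewrite R1 R2 !subrr !mulr0 addr0.
- rewrite !addnn -!mul2n !qbinomnn !qbinom_small; try lia.
  by rewrite /c !(mulr0, addr0, mulr1) add0r mulrC.
Qed.

Definition qsum (p n d : nat) : RF :=
  \sum_(0 <= k < n) qq ^+ k * qbinom (2 * k) (k + d) * qpoch (- qq ^+ k.+1) (n - 1 - k) ^+ p.

Lemma qsum0 p d : qsum p 0 d = 0.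
Proof. by rewrite /qsum big_geq. Qed.

Lemma qsumS p n d :
  qsum p n.+1 d = (1 + qq ^+ n) ^+ p * qsum p n d + qq ^+ n * qbinom (2 * n) (n + d).
Proof.
rewrite /qsum big_nat_recr //= subSS subn0 subnn qpoch0 expr1n mulr1; congr (_ + _).
rewrite mulr_sumr; apply: eq_big_nat => k /andP [_ lt_kn].
rewrite (_ : n - k = (n - 1 - k).+1)%N; last lia.
rewrite qpochS exprMn mulNr opprK -exprD (_ : (k.+1 + (n - 1 - k) = n)%N); last lia.
ring.
Qed.

Lemma qsum_small p n d : (n <= d)%N -> qsum p n d = 0.
Proof.
elim: n => [|n IHn] le_nd; first exact: qsum0.
by rewrite qsumS IHn 1?ltnW // qbinom_small ?mulr0 ?addr0 //; lia.
Qed.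

Lemma qsum_last p n : qsum p n.+1 n = qq ^+ n.
Proof. by rewrite qsumS qsum_small // mulr0 add0r addnn -mul2n qbinomnn mulr1. Qed.

Lemma qsum1_rec n d :
  (1 + qq ^+ n) * (qsum 1 n d + (qq ^+ d.+1) ^+ 3 * qsum 1 n d.+2)
  = qq ^+ d * (1 + qq ^+ d.+1) * qbinom (2 * n) (n + d.+1).
Proof.
elim: n => [|n IHn]; first by rewrite !qsum0 qbinom_small // !(mulr0, addr0).
rewrite -qbinom_central_rec -IHn !qsumS !expr1; ring.
Qed.

Definition qdiff2 (Y : nat -> RF) d : RF := Y d.+2 - Y d.+1 - qq ^+ d.+1 * (Y d.+1 - Y d).

Lemma qsum2_rec n d :
  (1 + qq ^+ n) * qdiff2 (fun j => qq ^+ (j * j) * qsum 2 n j) d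
  = qq ^+ (d.+1 * d.+1) * (1 + qq ^+ d.+1) * qbinom (2 * n) (n + d.+1).
Proof.
have sq1 : qq ^+ (d.+1 * d.+1) = qq ^+ (d * d) * qq ^+ d.+1 * qq ^+ d.
  by rewrite -!exprD; congr (_ ^+ _); lia.
have sq2 : qq ^+ (d.+2 * d.+2) = qq ^+ (d * d) * qq ^+ d.+1 * (qq ^+ d.+1) ^+ 3.
  by rewrite -exprM -!exprD; congr (_ ^+ _); lia.
elim: n => [|n IHn].
  by rewrite /qdiff2 !qsum0 qbinom_small // !(mulr0, subrr).
have lin : qdiff2 (fun j => qq ^+ (j * j) * qsum 2 n.+1 j) d
    = (1 + qq ^+ n) ^+ 2 * qdiff2 (fun j => qq ^+ (j * j) * qsum 2 n j) d
      + qq ^+ n * qdiff2 (fun j => qq ^+ (j * j) * qbinom (2 * n) (n + j)) d.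
  by rewrite /qdiff2 !qsumS; ring.
rewrite lin expr2 -mulrA IHn /qdiff2 sq1 sq2.
(* The q-binomial part is q^(d^2+d+1) times the one in the recurrence for qsum 1. *)
transitivity (qq ^+ (d * d) * qq ^+ d.+1 * ((1 + qq ^+ n.+1) *
  (qq ^+ d * (1 + qq ^+ d.+1) * qbinom (2 * n) (n + d.+1)
   + qq ^+ n * qbinom (2 * n) (n + d)
   + qq ^+ n * (qq ^+ d.+1) ^+ 3 * qbinom (2 * n) (n + d.+2)))); first ring.
by rewrite qbinom_central_rec; ring.
Qed.

Lemma local_dvd_central_multiple n d (Z : RF) (c : {poly rat}) : (d.+2 <= n)%N ->
  (1 + qq ^+ n) * Z = tofrac c * qbinom (2 * n) (n + d.+1) -> local_dvd (PhiQ n) Z.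
Proof.
move=> le_dn eqZ; have n_gt0 : (0 < n)%N by lia.
apply: (local_dvd_cancel (poly1DXn_neq0 n) (coprimep_1DXn_PhiQ n_gt0)).
rewrite tofracD tofrac1 tofracXn eqZ; apply: local_dvdMpl.
by apply: qbinom_central_local_dvd; lia.
Qed.

Definition qsum1_closed n d : RF :=
  let s := ((n - 1 - d) %/ 2)%N in
  if odd (n - d) then (-1) ^+ s * qq ^+ (3 * s * (n - 1 - s)) / qq else 0.

Lemma qsum1_closed_rec n d : (d.+2 <= n)%N ->
  qsum1_closed n d = - (qq ^+ d.+1) ^+ 3 * qsum1_closed n d.+2.
Proof.
move=> le_dn; rewrite /qsum1_closed (_ : n - d = (n - d.+2).+2)%N; last lia.
rewrite !oddS negbK; case: ifP => [odd_nd | _]; last by rewrite mulr0.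
have [s def_s] : exists s, (n - 1 - d.+2 = 2 * s)%N.
  by have := modn2 (n - d.+2); rewrite odd_nd; exists ((n - 1 - d.+2) %/ 2)%N; lia.
rewrite def_s (_ : (n - 1 - d) %/ 2 = s.+1)%N; last lia.
rewrite (_ : 2 * s %/ 2 = s)%N; last lia.
rewrite (_ : 3 * s.+1 * (n - 1 - s.+1) = d.+1 * 3 + 3 * s * (n - 1 - s))%N; last nia.
by rewrite exprS exprD exprM; ring.
Qed.

Lemma qsum1_local_dvd n d : (0 < n)%N -> (d <= n)%N ->
  local_dvd (PhiQ n) (qsum 1 n d - qsum1_closed n d).
Proof.
move=> n_gt0; move: d; apply: nat_down_ind2 => [| |d le_dn _ IHd2].
- by rewrite qsum_small // /qsum1_closed subnn /= subrr; apply: local_dvd0.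
- have [m def_n] : exists m, n = m.+1 by exists n.-1; lia.
  rewrite def_n /= qsum_last /qsum1_closed subSnn /= (_ : (m.+1 - 1 - m) %/ 2 = 0)%N; last lia.
  rewrite muln0 mul0n !expr0 mul1r.
  have -> : qq ^+ m - 1 / qq = tofrac 1 / tofrac 'X * tofrac ('X^(m.+1) - 1).
    by rewrite tofracB !tofrac1 tofracXn -/qq mulrBr mulr1 exprS !mul1r mulKf ?qq_neq0.
  apply: local_dvdMl; first by rewrite polyX_eq0.
    by rewrite -['X]expr1 coprimep_Xn_PhiQ.
  by apply: local_dvd_poly; rewrite -def_n PhiQ_dvd_Xn_sub1.
- rewrite qsum1_closed_rec //.
  have -> : qsum 1 n d - - (qq ^+ d.+1) ^+ 3 * qsum1_closed n d.+2
      = (qsum 1 n d + (qq ^+ d.+1) ^+ 3 * qsum 1 n d.+2)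
        - tofrac ('X^(d.+1) ^+ 3) * (qsum 1 n d.+2 - qsum1_closed n d.+2).
    by rewrite !tofracXn; ring.
  apply: local_dvdB; last exact: local_dvdMpl.
  apply: (local_dvd_central_multiple (c := 'X^d * (1 + 'X^(d.+1))) le_dn).
  by rewrite qsum1_rec tofracM tofracD tofrac1 !tofracXn.
Qed.

Definition qsum2_closed n d : RF := \sum_(d.+1 <= k < n.+1) qq ^+ ('C(n, 2) + 'C(k, 2)).

Lemma qdiff2_qsum2_closed n d : (d.+2 <= n)%N -> qdiff2 (qsum2_closed n) d = 0.
Proof.
move=> le_dn; rewrite /qdiff2 /qsum2_closed (@big_ltn _ _ _ d.+1); last lia.
rewrite (@big_ltn _ _ _ d.+2); last lia.
by rewrite binS bin1 addnA exprD; ring.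
Qed.

Lemma qsum2_local_dvd n d : (0 < n)%N -> (d <= n)%N ->
  local_dvd (PhiQ n) (qq ^+ (d * d) * qsum 2 n d - qsum2_closed n d).
Proof.
move=> n_gt0; move: d; apply: nat_down_ind2 => [| |d le_dn IHd1 IHd2].
- by rewrite qsum_small // /qsum2_closed big_geq // mulr0 subrr; apply: local_dvd0.
- have [m def_n] : exists m, n = m.+1 by exists n.-1; lia.
  have bin2_double : ('C(m.+1, 2) + 'C(m.+1, 2) = m * m + m)%N.
    by elim: (m) => // k IHk; rewrite binS bin1; lia.
  rewrite def_n /= qsum_last /qsum2_closed big_nat1 -!exprD bin2_double subrr.
  exact: local_dvd0.
- set Y := fun j => qq ^+ (j * j) * qsum 2 n j - qsum2_closed n j.
  have dY : local_dvd (PhiQ n) (qdiff2 Y d).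
    have -> : qdiff2 Y d
        = qdiff2 (fun j => qq ^+ (j * j) * qsum 2 n j) d - qdiff2 (qsum2_closed n) d.
      by rewrite /qdiff2 /Y; ring.
    rewrite qdiff2_qsum2_closed // subr0.
    apply: (local_dvd_central_multiple (c := 'X^(d.+1 * d.+1) * (1 + 'X^(d.+1))) le_dn).
    by rewrite qsum2_rec tofracM tofracD tofrac1 !tofracXn.
  apply: (local_dvd_cancel (expf_neq0 d.+1 (negbT (polyX_eq0 _))) (coprimep_Xn_PhiQ d.+1 n_gt0)).
  have -> : tofrac 'X^(d.+1) * Y d
      = qdiff2 Y d - (Y d.+2 - Y d.+1) + tofrac 'X^(d.+1) * Y d.+1.
    by rewrite tofracXn /qdiff2; ring.
  exact: local_dvdD (local_dvdB dY (local_dvdB IHd2 IHd1)) (local_dvdMpl _ IHd1).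
Qed.

Lemma cong_PhiE n A B : cong_Phi n A B <-> local_dvd (PhiQ n) (A - B).
Proof. by []. Qed.

Lemma sq_diff_div4 n d s : (d + 2 * s = n - 1)%N ->
  (3 * ((n - 1) ^ 2 - d ^ 2) %/ 4 = 3 * s * (n - 1 - s))%N.
Proof.
move=> def_n1; rewrite -def_n1 -!mulnn.
rewrite (_ : (d + 2 * s) * (d + 2 * s) - d * d = 4 * (s * (d + s)))%N; last nia.
by rewrite mulnCA mulKn //; nia.
Qed.

Lemma qsum1_closedE n d : (d < n)%N -> odd (n - d) ->
  qsum1_closed n d
  = (-1) ^+ ((n - 1 - d) %/ 2 %% 2) * qq ^ (Posz (3 * ((n - 1) ^ 2 - d ^ 2) %/ 4)%N - 1).
Proof.
move=> lt_dn odd_nd; rewrite /qsum1_closed odd_nd modn2 signr_odd.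
have := modn2 (n - d); rewrite odd_nd => mod_nd.
rewrite exprz_subn ?qq_neq0 // expr1 mulrA (@sq_diff_div4 _ _ ((n - 1 - d) %/ 2)) //.
lia.
Qed.

Lemma qsum2_cong n d : (0 < n)%N -> (d <= n)%N ->
  cong_Phi n (qsum 2 n d)
    (\sum_(d.+1 <= k < n.+1) qq ^ (Posz ('C(n, 2) + 'C(k, 2))%N - Posz (d ^ 2)%N)).
Proof.
move=> n_gt0 le_dn; apply/cong_PhiE.
have -> : \sum_(d.+1 <= k < n.+1) qq ^ (Posz ('C(n, 2) + 'C(k, 2))%N - Posz (d ^ 2)%N)
    = qsum2_closed n d / qq ^+ (d * d).
  rewrite /qsum2_closed mulr_suml; apply: eq_bigr => k _.
  by rewrite exprz_subn ?qq_neq0 // mulnn.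
have -> : qsum 2 n d - qsum2_closed n d / qq ^+ (d * d)
    = tofrac 1 / tofrac 'X^(d * d) * (qq ^+ (d * d) * qsum 2 n d - qsum2_closed n d).
  by rewrite tofrac1 tofracXn -/qq mulrBr mul1r mulKf ?expf_neq0 ?qq_neq0 // mulrC.
apply: local_dvdMl; last exact: qsum2_local_dvd.
  by rewrite expf_neq0 // polyX_eq0.
exact: coprimep_Xn_PhiQ.
Qed.

Theorem corollary1p2 (n d : nat) :
  (1 <= n)%N -> (d <= n - 1)%N ->
  let S1 := \sum_(0 <= k < n)
              qq ^+ k * qbinom (2 * k) (k + d) * qpoch (- qq ^+ k.+1) (n - 1 - k) in
  let S2 := \sum_(0 <= k < n)
              qq ^+ k * qbinom (2 * k) (k + d) * qpoch (- qq ^+ k.+1) (n - 1 - k) ^+ 2 in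
  let e : int := (Posz (3 * ((n - 1) ^ 2 - d ^ 2) %/ 4)%N) - 1 in
  [/\ (n = d %[mod 2])%N -> cong_Phi n S1 0,
      (n = d + 1 %[mod 4])%N -> cong_Phi n S1 (qq ^ e),
      (n + 1 = d %[mod 4])%N -> cong_Phi n S1 (- qq ^ e)
    & cong_Phi n S2
        (\sum_(d.+1 <= k < n.+1)
           qq ^ (Posz ('C(n, 2) + 'C(k, 2))%N - Posz (d ^ 2)%N))].
Proof.
move=> n_gt0 le_dn1 S1 S2 e; have lt_dn : (d < n)%N by lia.
have cong1 : cong_Phi n S1 (qsum1_closed n d) := qsum1_local_dvd n_gt0 (ltnW lt_dn).
have oddE : odd (n - d) = ((n - d) %% 2 == 1)%N by rewrite modn2; case: odd.
split.
- by move=> mod2; move: cong1; rewrite /qsum1_closed oddE ifN //; lia.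
- move=> mod4; move: cong1; rewrite qsum1_closedE // ?oddE; last lia.
  by rewrite (_ : (n - 1 - d) %/ 2 %% 2 = 0)%N ?expr0 ?mul1r //; lia.
- move=> mod4; move: cong1; rewrite qsum1_closedE // ?oddE; last lia.
  by rewrite (_ : (n - 1 - d) %/ 2 %% 2 = 1)%N ?expr1 ?mulN1r //; lia.
- exact: qsum2_cong n_gt0 (ltnW lt_dn).
Qed.
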